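(* Let $T \ge 1$ and $E \ge 0$ be integers, let $f \in \mathbb{R}[x]$ have at most $T$ nonzero terms, and let $\xi_1, \dots, \xi_{2T+2E}$ be distinct positive real numbers. Suppose we are given values $y_i = f(\xi_i) + \epsilon_i$, $1 \le i \le 2T+2E$, where $\epsilon_i \in \mathbb{R}$ and at most $E$ of the $\epsilon_i$ are nonzero. If $g \in \mathbb{R}[x]$ has at most $T$ nonzero terms and satisfies $g(\xi_i) = y_i$ for at least $2T+E$ indices $i$, then $g = f$. *)

From mathcomp Require Import all_boot all_order all_algebra.
From mathcomp Require Import reals.
Set Implicit Arguments. Unset Strict Implicit. Unset Printing Implicit Defensive.
Import Order.TTheory GRing.Theory Num.Theory.
Local Open Scope ring_scope.

Definition nterms (R : nzRingType) (p : {poly R}) : nat :=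
  #|[set i : 'I_(size p) | p`_i != 0]|.

From mathcomp Require Import all_boot all_order all_algebra.
From mathcomp Require Import reals.
From mathcomp Require Import polyorder polyrcf zify.
Set Implicit Arguments. Unset Strict Implicit. Unset Printing Implicit Defensive.
Import Order.TTheory GRing.Theory Num.Theory.
Local Open Scope ring_scope.

(* Descartes-type bound: a nonzero real polynomial with at most k + 1 nonzero
   coefficients has at most k positive roots.  If p(0) = 0 divide by X; otherwise
   Rolle's theorem puts a root of p' strictly between consecutive positive roots
   of p, and p' has one nonzero coefficient fewer than p.  Now g - f has at most
   2T nonzero coefficients and vanishes at the at least 2T points xi_i where g
   agrees with the data and eps_i = 0, so it is the zero polynomial. *)

Section NumberOfTerms.
Variable R : nzRingType.
Implicit Types p q : {poly R}.

Lemma nterms_sum p n :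
  (size p <= n)%N -> nterms p = (\sum_(i < n) ((p`_i != 0)%R : nat))%N.
Proof.
move=> le_pn; rewrite /nterms cardsE -sum1_card big_mkcond /=.
rewrite -(subnKC le_pn) big_split_ord /= [X in (_ + X)%N]big1 ?addn0.
  by apply: eq_bigr => i _; rewrite unfold_in; case: (_ != 0).
by move=> i _; rewrite nth_default ?eqxx // leq_addr.
Qed.

Lemma nterms_gt0 p : (0 < nterms p)%N = (p != 0).
Proof.
rewrite /nterms card_gt0; apply/set0Pn/idP => [[i _]|p0]; last first.
  have lt_p : ((size p).-1 < size p)%N by rewrite prednK ?size_poly_gt0.
  by exists (Ordinal lt_p); rewrite inE /= -lead_coefE lead_coef_eq0.
by rewrite -size_poly_gt0 (leq_ltn_trans _ (ltn_ord i)).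
Qed.

Lemma nterms_mulX p : nterms (p * 'X) = nterms p.
Proof.
rewrite (@nterms_sum _ (size p).+1); last first.
  by have [->|p0] := eqVneq p 0; rewrite ?mul0r ?size_poly0 // size_mulX.
rewrite big_ord_recl coefMX eqxx add0n (nterms_sum (leqnn (size p))).
by apply: eq_bigr => i _; rewrite coefMX.
Qed.

Lemma nterms_sub p q : (nterms (p - q) <= nterms p + nterms q)%N.
Proof.
set n := maxn (size p) (size q).
rewrite (@nterms_sum p n) ?leq_maxl // (@nterms_sum q n) ?leq_maxr //.
rewrite (@nterms_sum _ n); last by rewrite (leq_trans (size_polyD _ _)) ?size_polyN.
rewrite -big_split /=; apply: leq_sum => i _; rewrite coefB.
have [->|_] := eqVneq p`_i 0; first by rewrite sub0r oppr_eq0.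
by rewrite (leq_trans (leq_b1 _)) ?leq_addr.
Qed.

End NumberOfTerms.

Lemma nterms_deriv (R : numDomainType) (p : {poly R}) :
  nterms p = ((p`_0 != 0)%R + nterms p^`())%N.
Proof.
have le_dp : (size p^`() <= size p)%N.
  by have [->|/lt_size_deriv/ltnW//] := eqVneq p 0; rewrite deriv0.
rewrite (@nterms_sum _ p (size p).+1) // big_ord_recl (nterms_sum le_dp).
by congr (_ + _)%N; apply: eq_bigr => i _; rewrite coef_deriv mulrn_eq0.
Qed.

Lemma drop_poly1_mulX (R : nzRingType) (p : {poly R}) :
  p`_0 = 0 -> p = drop_poly 1 p * 'X.
Proof.
by move=> p0_0; apply/polyP => -[|i]; rewrite coefMX coef_drop_poly ?addn1.
Qed.

Section PositiveRoots.
Variable R : rcfType.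
Implicit Types (p : {poly R}) (s : seq R).

Lemma rolle_path p x s :
  path <%R x s -> root p x -> all (root p) s ->
  exists t, [/\ size t = size s, sorted <%R t, all (fun c => x < c) t &
                all (root p^`()) t].
Proof.
elim: s x => [|y s IH] x /=; first by exists [::].
move=> /andP[lt_xy path_ys] px /andP[py ps].
have [t [size_t sorted_t gt_y_t dpt]] := IH y path_ys py ps.
have [c /itvP c_xy dpc] : {c | c \in `]x, y[ & p^`().[c] = 0}.
  by apply: poly_rolle => //; rewrite (rootP px) (rootP py).
exists (c :: t); split => /=; first by rewrite size_t.
- rewrite (path_sortedE lt_trans) sorted_t andbT.
  by apply/allP => z /(allP gt_y_t); apply: lt_trans; rewrite c_xy.
- by rewrite c_xy; apply/allP => z /(allP gt_y_t); apply: lt_trans.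
- by rewrite dpt andbT; apply/rootP.
Qed.

Lemma sorted_pos_roots_lt_nterms p s :
  p != 0 -> sorted <%R s -> all (fun x => 0 < x) s -> all (root p) s ->
  (size s < nterms p)%N.
Proof.
have [n] := ubnP (size p); elim: n => // n IH in p s *.
rewrite ltnS => le_pn p0 sorted_s pos_s ps.
have [p0_0|p0_0] := eqVneq p`_0 0.
  set q := drop_poly 1 p; have pqX : p = q * 'X := drop_poly1_mulX p0_0.
  have q0 : q != 0 by apply: contraNneq p0 => q0; rewrite pqX q0 mul0r.
  rewrite pqX nterms_mulX; apply: IH => //.
    by rewrite -ltnS -(size_mulX q0) -pqX.
  apply/allP => x xs; move: (allP ps x xs) (allP pos_s x xs).
  by rewrite pqX rootM rootX => /orP[//|/eqP ->]; rewrite ltxx.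
case: s => [|x s] /= in sorted_s pos_s ps *; first by rewrite nterms_gt0.
case/andP: pos_s => x_pos _; case/andP: ps => px ps.
have dp0 : p^`() != 0.
  apply: contraNneq p0_0 => dp0.
  have le_p1 : (size p <= 1)%N.
    by move/eqP: dp0; rewrite -size_poly_eq0 size_deriv; case: (size p) => [|[]].
  by move: px; rewrite [p in root p]size1_polyC // rootC.
have [t [<- sorted_t gt_x_t dpt]] := rolle_path sorted_s px ps.
rewrite (nterms_deriv p) p0_0 add1n ltnS; apply: IH => //.
- by rewrite (leq_trans _ le_pn) // size_deriv prednK ?size_poly_gt0.
- by apply/allP => c /(allP gt_x_t); exact: lt_trans x_pos.
Qed.

Lemma uniq_pos_roots_lt_nterms p s :
  p != 0 -> uniq s -> all (fun x => 0 < x) s -> all (root p) s ->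
  (size s < nterms p)%N.
Proof.
move=> p0 uniq_s pos_s ps; have perm_s := permEl (perm_sort <=%R s).
by rewrite -(perm_size perm_s) sorted_pos_roots_lt_nterms
  ?sort_lt_sorted ?(perm_all _ perm_s).
Qed.

End PositiveRoots.

Theorem corollary2 (R : realType) (T E : nat) (hT : (1 <= T)%N)
  (f : {poly R}) (hf : (nterms f <= T)%N)
  (xi : 'I_(2 * T + 2 * E) -> R) (xi_inj : injective xi)
  (xi_pos : forall i, 0 < xi i)
  (eps : 'I_(2 * T + 2 * E) -> R)
  (heps : (#|[set i | (eps i != 0)%R]| <= E)%N)
  (g : {poly R}) (hg : (nterms g <= T)%N)
  (hagree : (2 * T + E <= #|[set i | (g.[xi i] == f.[xi i] + eps i)%R]|)%N) :
  g = f.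
Proof.
set agree := [set i | _] in hagree; set errors := [set i | _] in heps.
set exact_fit := agree :\: errors.
have card_fit : (2 * T <= #|exact_fit|)%N.
  have : (#|agree :&: errors| <= E)%N.
    exact: leq_trans (subset_leq_card (subsetIr _ _)) heps.
  rewrite cardsD; lia.
have nterms_gf : (nterms (g - f) <= 2 * T)%N.
  by rewrite (leq_trans (nterms_sub g f)) // mul2n -addnn leq_add.
have fit_roots : all (root (g - f)) (map xi (enum exact_fit)).
  apply/allP => x /mapP[i]; rewrite mem_enum !inE negbK => /andP[/eqP e0 /eqP gi] ->.
  by rewrite rootE !hornerE gi e0 addr0 subrr.
apply/eqP; rewrite -subr_eq0; apply: contraTT card_fit => gf0; rewrite -ltnNge.
rewrite cardE -(size_map xi) (leq_trans _ nterms_gf) //.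
apply: uniq_pos_roots_lt_nterms fit_roots => //.
  by rewrite map_inj_uniq ?enum_uniq.
by apply/allP => x /mapP[i _ ->].
Qed.
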